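(* For every natural number $n\geq 2$: (i) $\chi_d^t(F_n\star K_n)=n+3$; (ii) $\chi_d^t(F_n\star C_{2n})=5$.
   Context: All graphs are simple and finite. A total dominator coloring (TD-coloring) of a graph $G$ with no isolated vertex is a proper vertex coloring of $G$ in which every vertex of $G$ is adjacent to every vertex of some color class. The total dominator chromatic number $\chi_d^t(G)$ is the minimum number of colors in a TD-coloring of $G$. The neighbourhood corona $G_1\star G_2$ is the graph obtained by taking one copy of $G_1$ and $|V(G_1)|$ copies of $G_2$, and, for each $i$, joining every neighbour (in $G_1$) of the $i$-th vertex of $G_1$ to every vertex of the $i$-th copy of $G_2$. The friendship graph $F_n$ ($n\ge 2$) is obtained by joining $n$ copies of the cycle $C_3$ at a common vertex. $K_n$ is the complete graph and $C_{2n}$ the cycle on $2n$ vertices. *)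

(* Simple graphs are symmetric irreflexive relations on a finType. *)
From mathcomp Require Import all_boot.
Set Implicit Arguments. Unset Strict Implicit. Unset Printing Implicit Defensive.

Definition complete_rel (n : nat) : rel 'I_n := fun x y => x != y.

Definition cycle_rel (m : nat) : rel 'I_m :=
  fun x y => ((x.+1 %% m) == y) || ((y.+1 %% m) == x).

(* Friendship graph F_n: center None, triangle i has vertices Some (i,false),
   Some (i,true); the center is joined to all, and the two non-central
   vertices of each triangle are joined. *)
Definition friendship_rel (n : nat) : rel (option ('I_n * bool)) :=
  fun x y => match x, y with
  | None, None => false
  | None, Some _ => true
  | Some _, None => true
  | Some (i, b), Some (j, c) => (i == j) && (b != c)
  end.

(* Neighbourhood corona G1 * G2: vertex set V1 + (V1 x V2); inr (i, x) is
   vertex x of the i-th copy of G2. *)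
Definition ncorona (V1 V2 : finType) (e1 : rel V1) (e2 : rel V2)
  : rel (V1 + (V1 * V2)) :=
  fun a b => match a, b with
  | inl u, inl v => e1 u v
  | inl u, inr (i, _) => e1 u i
  | inr (i, _), inl u => e1 i u
  | inr (i, x), inr (j, y) => (i == j) && e2 x y
  end.

Definition td_coloring (V : finType) (e : rel V) (k : nat) (c : V -> 'I_k) : Prop :=
  (forall x y, e x y -> c x != c y) /\
  (forall v, exists j : 'I_k, (exists u, c u = j) /\ (forall u, c u = j -> e v u)).

Definition td_chromatic_number_is (V : finType) (e : rel V) (k : nat) : Prop :=
  (exists c : V -> 'I_k, td_coloring e c) /\
  (forall (k' : nat) (c : V -> 'I_k'), td_coloring e c -> k <= k').

From mathcomp Require Import all_boot zify.
Set Implicit Arguments. Unset Strict Implicit. Unset Printing Implicit Defensive.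

(* Colouring the centre of F_n, the two sides of every triangle, and each copy of
   G by a proper colouring of G gives chi_d^t(F_n * G) <= chi(G) + 3: the centre
   dominates everything attached to a triangle, and one side class dominates
   everything attached to the centre.  Conversely, suppose k <= chi(G) + 2 and
   fix a triangle v0 v1.  The copy at the centre avoids the two distinct colours
   of v0 and v1, so these account for all colours and the centre's colour occurs
   on that copy; symmetrically the colour of v1 occurs on the copy at v1.  Then
   every colour class meets v0, the copy at the centre or the copy at v1, none of
   which is adjacent to a vertex of the copy at v0.  Finally chi(K_n) = n and
   chi(C_2n) = 2. *)

Definition proper_coloring (V : finType) (e : rel V) (k : nat) (c : V -> 'I_k) :=
  forall x y, e x y -> c x != c y.

Section Colorings.

Variables (V : finType) (e : rel V) (k : nat) (c : V -> 'I_k).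

Lemma proper_color_notin_imset (W : finType) (h : W -> V) (v : V) :
  proper_coloring e c -> (forall w, e v (h w)) -> c v \notin [set c (h w) | w : W].
Proof.
move=> prop_c adj_v; apply/imsetP => -[w _ cvw].
by have := prop_c _ _ (adj_v w); rewrite cvw eqxx.
Qed.

Lemma dominating_class_notin_imset (W : finType) (h : W -> V) (v : V) (j : 'I_k) :
  (forall u, c u = j -> e v u) -> (forall w, ~~ e v (h w)) ->
  j \notin [set c (h w) | w : W].
Proof.
by move=> dom_j nadj_v; apply/imsetP => -[w _ /esym/dom_j]; apply/negP.
Qed.

End Colorings.

Lemma ord_setU2_full (k : nat) (a b : 'I_k) (C : {set 'I_k}) :
  a != b -> a \notin C -> b \notin C -> k < #|C| + 3 ->
  forall j, [|| j == a, j == b | j \in C].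
Proof.
move=> neq_ab aC bC lt_k_C j.
have full : a |: (b |: C) = setT.
  apply/eqP; rewrite eqEcard subsetT cardsT card_ord !cardsU1 in_setU1.
  by rewrite (negbTE neq_ab) aC bC add1n add1n -ltnS -addn3.
by have := in_setT j; rewrite -full !in_setU1.
Qed.

Lemma td_coloring_of_nat (V : finType) (e : rel V) (k : nat) (f : V -> nat) :
  (forall v, f v < k) -> (forall x y, e x y -> f x != f y) ->
  (forall v, exists u0, forall u, f u = f u0 -> e v u) ->
  exists c : V -> 'I_k, td_coloring e c.
Proof.
move=> f_lt f_prop f_dom; exists (fun v => Ordinal (f_lt v)); split.
  by move=> x y /f_prop; apply: contra => /eqP [->].
move=> v; have [u0 dom_u0] := f_dom v.
exists (Ordinal (f_lt u0)); split; first by exists u0.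
by move=> u [] /dom_u0.
Qed.

Section FriendshipCorona.

Variables (n : nat) (V2 : finType) (e2 : rel V2).

Local Notation G := (ncorona (@friendship_rel n) e2).

Lemma corona_copy_proper (k : nat) (c : _ -> 'I_k) u :
  proper_coloring G c -> proper_coloring e2 (fun y => c (inr (u, y))).
Proof. by move=> prop_c x y exy; apply: prop_c; rewrite /= eqxx. Qed.

Definition friendship_corona_color (m : nat) (g : V2 -> 'I_m)
  (v : option ('I_n * bool) + option ('I_n * bool) * V2) : nat :=
  match v with
  | inl None => m
  | inl (Some (_, b)) => m.+1 + b
  | inr (_, y) => g y
  end.

Lemma friendship_corona_color_center m (g : V2 -> 'I_m) u :
  friendship_corona_color g u = m -> u = inl None.
Proof.
by case: u => [[[i b]|]|[u y]] //=; [lia | have := ltn_ord (g y); lia].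
Qed.

Lemma friendship_corona_color_succ m (g : V2 -> 'I_m) u :
  friendship_corona_color g u = m.+1 -> exists i, u = inl (Some (i, false)).
Proof.
case: u => [[[i []]|]|[u y]] /=; [lia | by exists i | lia |].
by have := ltn_ord (g y); lia.
Qed.

Lemma friendship_corona_td_coloring (i0 : 'I_n) (m : nat) (g : V2 -> 'I_m) :
  proper_coloring e2 g -> exists c : _ -> 'I_(m + 3), td_coloring G c.
Proof.
move=> prop_g; set f := friendship_corona_color g.
apply: (@td_coloring_of_nat _ _ _ f).
- move=> [[[i []]|]|[u y]] /=; try lia.
  by have := ltn_ord (g y); lia.
- move=> [[[i b]|]|[u y]] [[[j d]|]|[u' z]] //=.
  + by move=> /andP[_]; rewrite eqn_add2l; case: b; case: d.
  + by move=> _; lia.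
  + by move=> _; have := ltn_ord (g z); lia.
  + by move=> _; lia.
  + by move=> _; have := ltn_ord (g z); lia.
  + by move=> _; have := ltn_ord (g y); lia.
  + by move=> _; have := ltn_ord (g y); lia.
  + by move=> /andP[_ /prop_g]; apply: contra => /eqP/val_inj ->.
- move=> [[[i b]|]|[[[i b]|] y]].
  + by exists (inl None) => u /friendship_corona_color_center ->.
  + exists (inl (Some (i0, false))) => u.
    by rewrite /= addn0 => /friendship_corona_color_succ[j ->].
  + by exists (inl None) => u /friendship_corona_color_center ->.
  + exists (inl (Some (i0, false))) => u.
    by rewrite /= addn0 => /friendship_corona_color_succ[j ->].
Qed.

Section LowerBound.

Variables (p : nat) (i0 : 'I_n) (x0 : V2).
Hypothesis colors_lb :
  forall k (g : V2 -> 'I_k), proper_coloring e2 g -> p <= #|[set g y | y : V2]|.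

Lemma friendship_corona_td_colors_lb (k : nat) (c : _ -> 'I_k) :
  td_coloring G c -> p + 3 <= k.
Proof.
move=> [prop_c dom_c]; rewrite leqNgt; apply/negP => lt_k.
set w := @None ('I_n * bool); set v0 := Some (i0, false); set v1 := Some (i0, true).
pose copy u := [set c (inr (u, y)) | y : V2].
have copy_lb u : p <= #|copy u| by apply/colors_lb/corona_copy_proper.
have neq01 : c (inl v0) != c (inl v1) by apply: prop_c; rewrite /= eqxx.
have neqw0 : c (inl w) != c (inl v0) by apply: prop_c.
have neqw1 : c (inl w) != c (inl v1) by apply: prop_c.
have colors_w j : [|| j == c (inl v0), j == c (inl v1) | j \in copy w].
  apply: ord_setU2_full => //.
  - by apply: (proper_color_notin_imset prop_c).
  - by apply: (proper_color_notin_imset prop_c).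
  - by apply: leq_trans lt_k _; rewrite leq_add2r.
have colors_v1 j : [|| j == c (inl w), j == c (inl v0) | j \in copy v1].
  apply: ord_setU2_full => //.
  - by apply: (proper_color_notin_imset prop_c).
  - by apply: (proper_color_notin_imset prop_c) => y /=; rewrite eqxx.
  - by apply: leq_trans lt_k _; rewrite leq_add2r.
have cv1_copy : c (inl v1) \in copy v1.
  by have := colors_v1 (c (inl v1)); rewrite eq_sym (negbTE neqw1) eq_sym (negbTE neq01).
have [j [_ dom_j]] := dom_c (inr (v0, x0)).
have /or3P[/eqP j_v0|/eqP j_v1|j_w] := colors_w j.
- by have := dom_j (inl v0) (esym j_v0); rewrite /= eqxx.
- move: cv1_copy; rewrite -j_v1; apply/negP/(dominating_class_notin_imset dom_j) => y /=.
  by rewrite [v0 == v1](_ : _ = false) //; apply/eqP => -[].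
- by move: j_w; apply/negP/(dominating_class_notin_imset dom_j).
Qed.

End LowerBound.

End FriendshipCorona.

Lemma complete_colors_lb (n k : nat) (g : 'I_n -> 'I_k) :
  proper_coloring (@complete_rel n) g -> n <= #|[set g y | y : 'I_n]|.
Proof.
move=> prop_g; rewrite card_imset ?cardsT ?card_ord // => x y gxy.
by apply/eqP; apply: contraT => /prop_g; rewrite gxy eqxx.
Qed.

Lemma cycle_colors_lb (m k : nat) (g : 'I_m -> 'I_k) :
  1 < m -> proper_coloring (@cycle_rel m) g -> 2 <= #|[set g y | y : 'I_m]|.
Proof.
move=> m_gt1 prop_g; have m_gt0 := ltnW m_gt1.
have /prop_g neq_g01 : cycle_rel (Ordinal m_gt0) (Ordinal m_gt1).
  by rewrite /cycle_rel /= modn_small ?eqxx.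
have := cards2 (g (Ordinal m_gt0)) (g (Ordinal m_gt1)); rewrite neq_g01 => <-.
by apply/subset_leq_card/subsetP => j; rewrite !inE => /orP[]/eqP->; apply: imset_f.
Qed.

Lemma cycle_rel_odd (m : nat) (x y : 'I_m) :
  ~~ odd m -> cycle_rel x y -> odd x != odd y.
Proof.
move=> /negbTE even_m; have odd_succ a b : a.+1 %% m = b -> odd b = ~~ odd a.
  by move=> <-; rewrite odd_mod.
by case/orP=> /eqP/odd_succ ->; case: odd.
Qed.

Definition ord_parity (m : nat) (y : 'I_m) : 'I_2 := if odd y then ord_max else ord0.

Lemma cycle_parity_proper (m : nat) :
  ~~ odd m -> proper_coloring (@cycle_rel m) (@ord_parity m).
Proof.
move=> even_m x y /(cycle_rel_odd even_m); apply: contra.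
by rewrite /ord_parity; case: (odd x); case: (odd y).
Qed.

Theorem mainTheorem5 (n : nat) (hn : 2 <= n) :
  td_chromatic_number_is (ncorona (@friendship_rel n) (@complete_rel n)) (n + 3) /\
  td_chromatic_number_is (ncorona (@friendship_rel n) (@cycle_rel (2 * n))) 5.
Proof.
have n_gt0 : 0 < n by apply: ltnW.
pose i0 := Ordinal n_gt0.
have even_2n : ~~ odd (2 * n) by rewrite oddM.
have n2_gt1 : 1 < 2 * n by rewrite (leq_trans hn) // leq_pmull.
split; split.
- by apply: (friendship_corona_td_coloring i0 (g := id)) => x y.
- by move=> k c /(friendship_corona_td_colors_lb i0 i0 (@complete_colors_lb n)).
- exact: (friendship_corona_td_coloring i0 (cycle_parity_proper even_2n)).
- move=> k c; apply: (friendship_corona_td_colors_lb (p := 2) i0 (Ordinal n2_gt1)).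
  by move=> k' g; apply: cycle_colors_lb.
Qed.
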